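(* Let $\varepsilon,\delta,s>0$ with $0<4\delta s\le\varepsilon^2$. Let $\tilde u:\mathbb R\to\mathbb R$ be a smooth monotone function satisfying \[ \Big(\frac{\tilde u^2}{2}\Big)'=\varepsilon\tilde u''-\delta\tilde u''',\qquad \tilde u(x)\to \mp s,\ \ \tilde u'(x)\to0\ \text{ as }x\to\pm\infty . \] Then, with $\underline\lambda=\sqrt2-1$ and $\bar\lambda=1$, \[ \underline\lambda\,(s-\tilde u(x))(\tilde u(x)+s)\le-\varepsilon\tilde u'(x)\le\bar\lambda\,(s-\tilde u(x))(\tilde u(x)+s)\qquad\forall x\in\mathbb R . \]
   Context: Here $\tilde u$ is the (stationary, speed $\sigma=0$) viscous-dispersive shock profile of the KdV--Burgers equation $u_t+(u^2/2)_x=\varepsilon u_{xx}-\delta u_{xxx}$ connecting $u_-=s$ to $u_+=-s$. *)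

From Stdlib Require Import Reals.
From Coquelicot Require Import Coquelicot.
Open Scope R_scope.

Definition smooth (u : R -> R) : Prop :=
  forall (n : nat) (x : R), ex_derive (Derive_n u n) x.

Definition monotone (u : R -> R) : Prop :=
  (forall x y : R, x <= y -> u x <= u y) \/ (forall x y : R, x <= y -> u y <= u x).

From Stdlib Require Import Reals Lra Psatz.
From Coquelicot Require Import Coquelicot.
Open Scope R_scope.

(* Integrating the profile equation once and using the limits at +oo gives
   delta u'' = (s - u)(u + s)/2 + eps u'.  For the barriers
   G_lam = lam (s - u)(u + s) + eps u', which vanish at -oo and +oo, this yields
     delta eps G_lam' = G_lam (eps^2 - 2 lam delta u)
                        + (s - u)(u + s) (eps^2/2 - lam eps^2 + 2 lam^2 delta u).
   As -s <= u <= s and 4 delta s <= eps^2, the first coefficient is positive, and the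
   second one is nonnegative when lam^2 + 2 lam <= 1 and nonpositive when lam = 1.
   Hence G_lam has no positive maximum in the first case and G_1 has no negative
   minimum, i.e. G_(sqrt 2 - 1) <= 0 <= G_1. *)

Lemma is_lim_eventually_lt (f : R -> R) (x : Rbar) (l c : R) :
  is_lim f x l -> l < c -> Rbar_locally' x (fun y => f y < c).
Proof. intros Hf Hlc. exact (Hf _ (open_lt c l Hlc)). Qed.

Lemma is_lim_eventually_gt (f : R -> R) (x : Rbar) (l c : R) :
  is_lim f x l -> c < l -> Rbar_locally' x (fun y => c < f y).
Proof. intros Hf Hcl. exact (Hf _ (open_gt c l Hcl)). Qed.

Lemma nondecreasing_between_limits (u : R -> R) (a b x : R) :
  (forall y z, y <= z -> u y <= u z) ->
  is_lim u m_infty a -> is_lim u p_infty b -> a <= u x <= b.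
Proof.
  intros Hu Ha Hb. split.
  - apply (is_lim_le_loc u (fun _ => u x) m_infty a (u x)); trivial.
    + exists x. intros y Hy. apply Hu. lra.
    + apply is_lim_const.
  - apply (is_lim_le_loc (fun _ => u x) u p_infty (u x) b); trivial.
    + exists x. intros y Hy. apply Hu. lra.
    + apply is_lim_const.
Qed.

Lemma monotone_between_limits (u : R -> R) (a b x : R) :
  monotone u -> is_lim u m_infty a -> is_lim u p_infty b -> b <= a -> b <= u x <= a.
Proof.
  intros [Hinc | Hdec] Ha Hb Hba.
  - pose proof (nondecreasing_between_limits u a b x Hinc Ha Hb). lra.
  - assert (Hopp : - a <= - u x <= - b).
    { apply (nondecreasing_between_limits (fun y => - u y)).
      - intros y z Hyz. specialize (Hdec y z Hyz). lra.
      - exact (is_lim_opp u m_infty a Ha).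
      - exact (is_lim_opp u p_infty b Hb). }
    lra.
Qed.

Lemma is_derive_zero_const (f : R -> R) :
  (forall x, is_derive f x 0) -> forall x y, f x = f y.
Proof.
  intros Hf.
  assert (Hlt : forall x y, x < y -> f x = f y)
    by (intros x y Hxy; apply eq_is_derive; [intros t _; apply Hf | exact Hxy]).
  intros x y. destruct (Rtotal_order x y) as [H | [H | H]].
  - exact (Hlt x y H).
  - subst y. reflexivity.
  - symmetry. exact (Hlt y x H).
Qed.

Lemma is_derive_lim_p_infty_le0 (f f' : R -> R) (l L : R) :
  (forall x, is_derive f x (f' x)) ->
  is_lim f p_infty l -> is_lim f' p_infty L -> L <= 0.
Proof.
  intros Hd Hf Hf'. apply Rnot_lt_le. intros HL.
  assert (Hev : Rbar_locally' p_infty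
            (fun y => L / 2 < f' y /\ l - L / 4 < f y /\ f y < l + L / 4)).
  { repeat apply filter_and.
    - apply (is_lim_eventually_gt f' _ L); trivial. lra.
    - apply (is_lim_eventually_gt f _ l); trivial. lra.
    - apply (is_lim_eventually_lt f _ l); trivial. lra. }
  destruct Hev as [M HM].
  destruct (MVT_cor2 f f' (M + 1) (M + 2)) as [c [Hmvt Hc]]; [lra | |].
  { intros c _. apply is_derive_Reals, Hd. }
  destruct (HM c) as [Hc' _]; [lra |].
  destruct (HM (M + 1)) as [_ [H1 _]]; [lra |].
  destruct (HM (M + 2)) as [_ [_ H2]]; [lra |].
  replace (M + 2 - (M + 1)) with 1 in Hmvt by ring.
  lra.
Qed.

Lemma is_derive_lim_p_infty_eq0 (f f' : R -> R) (l L : R) :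
  (forall x, is_derive f x (f' x)) ->
  is_lim f p_infty l -> is_lim f' p_infty L -> L = 0.
Proof.
  intros Hd Hf Hf'.
  assert (Hopp : - L <= 0).
  { apply (is_derive_lim_p_infty_le0 (fun y => - f y) (fun y => - f' y) (- l)).
    - intros x. exact (is_derive_opp f x (f' x) (Hd x)).
    - exact (is_lim_opp f p_infty l Hf).
    - exact (is_lim_opp f' p_infty L Hf'). }
  pose proof (is_derive_lim_p_infty_le0 f f' l L Hd Hf Hf'). lra.
Qed.

Lemma nonpos_of_deriv_pos_where_pos (g g' : R -> R) :
  (forall x, is_derive g x (g' x)) ->
  is_lim g m_infty 0 -> is_lim g p_infty 0 ->
  (forall x, 0 < g x -> 0 < g' x) -> forall x, g x <= 0.
Proof.
  intros Hd Hm Hp Hpos x0. apply Rnot_lt_le. intros Hx0.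
  destruct (is_lim_eventually_lt g m_infty 0 (g x0) Hm Hx0) as [M1 HM1].
  destruct (is_lim_eventually_lt g p_infty 0 (g x0) Hp Hx0) as [M2 HM2].
  set (a := Rmin M1 x0 - 1). set (b := Rmax M2 x0 + 1).
  assert (Ha : a < x0 /\ g a < g x0).
  { unfold a. split; [| apply HM1]; generalize (Rmin_l M1 x0) (Rmin_r M1 x0); lra. }
  assert (Hb : x0 < b /\ g b < g x0).
  { unfold b. split; [| apply HM2]; generalize (Rmax_l M2 x0) (Rmax_r M2 x0); lra. }
  assert (Hder : forall c, derivable_pt_lim g c (g' c))
    by (intros c; apply is_derive_Reals, Hd).
  destruct (continuity_ab_maj g a b) as [c [Hmax Hc]]; [lra | |].
  { intros c _. apply derivable_continuous_pt. exists (g' c). apply Hder. }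
  assert (Hgc : g x0 <= g c) by (apply Hmax; lra).
  assert (Hac : a < c) by (destruct (Req_dec a c); [subst; lra | lra]).
  assert (Hcb : c < b) by (destruct (Req_dec c b); [subst; lra | lra]).
  assert (Hcrit : g' c = 0).
  { exact (deriv_maximum g a b c (exist _ (g' c) (Hder c)) Hac Hcb
             (fun y Hay Hyb => Hmax y (conj (Rlt_le _ _ Hay) (Rlt_le _ _ Hyb)))). }
  specialize (Hpos c). lra.
Qed.

Lemma smooth_is_derive_Derive_n (u : R -> R) (n : nat) (x : R) :
  smooth u -> is_derive (Derive_n u n) x (Derive_n u (S n) x).
Proof. intros Hu. exact (Derive_correct _ x (Hu n x)). Qed.

Section ShockProfile.

Variables (eps delta s : R) (u : R -> R).

Hypotheses (eps_gt0 : 0 < eps) (delta_gt0 : 0 < delta) (s_gt0 : 0 < s)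
  (dispersion_small : 4 * delta * s <= eps ^ 2)
  (u_smooth : smooth u) (u_monotone : monotone u)
  (profile_eq : forall x, Derive (fun y => u y ^ 2 / 2) x
                          = eps * Derive_n u 2 x - delta * Derive_n u 3 x)
  (u_lim_m : is_lim u m_infty s) (u_lim_p : is_lim u p_infty (- s))
  (du_lim_m : is_lim (Derive u) m_infty 0) (du_lim_p : is_lim (Derive u) p_infty 0).

Lemma profile_range x : - s <= u x <= s.
Proof. apply monotone_between_limits; trivial. lra. Qed.

Definition barrier (lam : R) (y : R) : R :=
  lam * ((s - u y) * (u y + s)) + eps * Derive u y.

Lemma is_lim_barrier (x : Rbar) (a lam : R) :
  is_lim u x a -> is_lim (Derive u) x 0 -> a * a = s * s -> is_lim (barrier lam) x 0.
Proof.
  intros Hu Hdu Ha.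
  assert (Hf : is_lim (fun y => (s - u y) * (u y + s)) x ((s - a) * (a + s))).
  { apply (is_lim_comp_continuous u (fun v => (s - v) * (v + s))); trivial.
    apply (ex_derive_continuous (V := R_NormedModule)). auto_derive. trivial. }
  assert (Hzero : (s - a) * (a + s) = 0)
    by (transitivity (s * s - a * a); [ring | rewrite Ha; ring]).
  rewrite Hzero in Hf. replace 0 with (lam * 0 + eps * 0) by ring.
  apply is_lim_plus'.
  - exact (is_lim_scal_l _ lam x _ Hf).
  - exact (is_lim_scal_l _ eps x _ Hdu).
Qed.

Lemma is_derive_barrier (lam x : R) :
  is_derive (barrier lam) x (eps * Derive_n u 2 x - 2 * lam * u x * Derive u x).
Proof.
  unfold barrier. auto_derive.
  - repeat split; first [exact (u_smooth 0%nat x) | exact (u_smooth 1%nat x)].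
  - simpl. change (fun y => u y) with u. change (fun y => Derive u y) with (Derive u).
    ring.
Qed.

Definition energy y := u y ^ 2 / 2 - (eps * Derive u y - delta * Derive_n u 2 y).

Lemma is_derive_energy x : is_derive energy x 0.
Proof.
  assert (Hsq : is_derive (fun y => u y ^ 2 / 2) x (Derive (fun y => u y ^ 2 / 2) x)).
  { apply Derive_correct. auto_derive. exact (u_smooth 0%nat x). }
  assert (Hflux : is_derive (fun y => eps * Derive u y - delta * Derive_n u 2 y) x
                    (eps * Derive_n u 2 x - delta * Derive_n u 3 x)).
  { auto_derive.
    - repeat split; first [exact (u_smooth 1%nat x) | exact (u_smooth 2%nat x)].
    - simpl. change (fun y => u y) with u. change (fun y => Derive u y) with (Derive u).
      ring. }
  rewrite <- (Rminus_diag_eq _ _ (profile_eq x)).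
  exact (is_derive_minus _ _ _ _ _ Hsq Hflux).
Qed.

Lemma profile_second_order x : delta * Derive_n u 2 x = barrier (1 / 2) x.
Proof.
  assert (Hshift : forall y, delta * Derive_n u 2 y = barrier (1 / 2) y + (energy 0 - s ^ 2 / 2)).
  { intros y. rewrite <- (is_derive_zero_const energy is_derive_energy y 0).
    unfold barrier, energy. field. }
  assert (Hlim : is_lim (fun y => delta * Derive_n u 2 y) p_infty (0 + (energy 0 - s ^ 2 / 2))).
  { apply (is_lim_ext (fun y => barrier (1 / 2) y + (energy 0 - s ^ 2 / 2))).
    - intros y. symmetry. apply Hshift.
    - apply is_lim_plus'; [| apply is_lim_const].
      apply (is_lim_barrier _ (- s)); trivial. ring. }
  assert (Hdelta : forall y, is_derive (fun z => delta * Derive u z) y (delta * Derive_n u 2 y))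
    by (intros y; apply is_derive_scal, (smooth_is_derive_Derive_n u 1 y u_smooth)).
  pose proof (is_derive_lim_p_infty_eq0 _ _ (delta * 0) _ Hdelta
                (is_lim_scal_l _ delta p_infty 0 du_lim_p) Hlim).
  rewrite Hshift. lra.
Qed.

Lemma barrier_deriv_identity lam x :
  delta * eps * (eps * Derive_n u 2 x - 2 * lam * u x * Derive u x)
  = barrier lam x * (eps ^ 2 - 2 * lam * delta * u x)
    + (s - u x) * (u x + s) * (eps ^ 2 / 2 - lam * eps ^ 2 + 2 * lam ^ 2 * delta * u x).
Proof.
  replace (delta * eps * (eps * Derive_n u 2 x - 2 * lam * u x * Derive u x))
    with (eps ^ 2 * (delta * Derive_n u 2 x) - 2 * lam * delta * u x * (eps * Derive u x))
    by ring.
  rewrite profile_second_order. unfold barrier. field.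
Qed.

Lemma barrier_deriv_pos lam x :
  0 <= lam -> lam ^ 2 + 2 * lam <= 1 -> 0 < barrier lam x ->
  0 < eps * Derive_n u 2 x - 2 * lam * u x * Derive u x.
Proof.
  intros Hlam Hlam1 HG. destruct (profile_range x) as [Hlo Hhi].
  assert (Hf : 0 <= (s - u x) * (u x + s)) by (apply Rmult_le_pos; lra).
  assert (Hfirst : 0 < eps ^ 2 - 2 * lam * delta * u x).
  { assert (0 <= lam * (delta * (s - u x))) by (apply Rmult_le_pos; nra).
    assert (0 <= (1 - 2 * lam) * (delta * s)) by (apply Rmult_le_pos; nra).
    nra. }
  assert (Hsecond : 0 <= eps ^ 2 / 2 - lam * eps ^ 2 + 2 * lam ^ 2 * delta * u x).
  { assert (0 <= lam ^ 2 * (delta * (u x + s))) by (apply Rmult_le_pos; nra).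
    assert (0 <= lam ^ 2 * (eps ^ 2 - 4 * delta * s)) by (apply Rmult_le_pos; nra).
    assert (0 <= eps ^ 2 * (1 - 2 * lam - lam ^ 2)) by (apply Rmult_le_pos; nra).
    lra. }
  apply (Rmult_lt_reg_l (delta * eps)); [nra |].
  rewrite Rmult_0_r, barrier_deriv_identity.
  pose proof (Rmult_lt_0_compat _ _ HG Hfirst).
  pose proof (Rmult_le_pos _ _ Hf Hsecond).
  lra.
Qed.

Lemma barrier1_deriv_neg x :
  barrier 1 x < 0 -> eps * Derive_n u 2 x - 2 * 1 * u x * Derive u x < 0.
Proof.
  intros HG. destruct (profile_range x) as [Hlo Hhi].
  assert (Hf : 0 <= (s - u x) * (u x + s)) by (apply Rmult_le_pos; lra).
  assert (Hfirst : 0 < eps ^ 2 - 2 * 1 * delta * u x).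
  { assert (0 <= delta * (s - u x)) by (apply Rmult_le_pos; lra). nra. }
  assert (Hsecond : eps ^ 2 / 2 - 1 * eps ^ 2 + 2 * 1 ^ 2 * delta * u x <= 0).
  { assert (0 <= delta * (s - u x)) by (apply Rmult_le_pos; lra). nra. }
  apply (Rmult_lt_reg_l (delta * eps)); [nra |].
  rewrite Rmult_0_r, barrier_deriv_identity.
  pose proof (Rmult_lt_0_compat _ _ (Ropp_0_gt_lt_contravar _ HG) Hfirst).
  pose proof (Rmult_le_pos _ _ Hf (Ropp_0_ge_le_contravar _ (Rle_ge _ _ Hsecond))).
  nra.
Qed.

Lemma barrier_nonpos lam x : 0 <= lam -> lam ^ 2 + 2 * lam <= 1 -> barrier lam x <= 0.
Proof.
  intros Hlam Hlam1.
  apply (nonpos_of_deriv_pos_where_pos _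
           (fun y => eps * Derive_n u 2 y - 2 * lam * u y * Derive u y)).
  - exact (is_derive_barrier lam).
  - apply (is_lim_barrier _ s); trivial.
  - apply (is_lim_barrier _ (- s)); trivial. ring.
  - intros y. exact (barrier_deriv_pos lam y Hlam Hlam1).
Qed.

Lemma barrier1_nonneg x : 0 <= barrier 1 x.
Proof.
  assert (H : - barrier 1 x <= 0).
  { apply (nonpos_of_deriv_pos_where_pos (fun y => - barrier 1 y)
             (fun y => - (eps * Derive_n u 2 y - 2 * 1 * u y * Derive u y))).
    - intros y. exact (is_derive_opp _ y _ (is_derive_barrier 1 y)).
    - rewrite <- Ropp_0. apply (is_lim_opp _ m_infty 0), (is_lim_barrier _ s); trivial.
    - rewrite <- Ropp_0. apply (is_lim_opp _ p_infty 0), (is_lim_barrier _ (- s)); trivial.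
      ring.
    - intros y Hy. pose proof (barrier1_deriv_neg y). lra. }
  lra.
Qed.

End ShockProfile.

Theorem lemma2p3 (eps delta s : R) (u : R -> R) :
  0 < eps -> 0 < delta -> 0 < s -> 4 * delta * s <= eps ^ 2 ->
  smooth u -> monotone u ->
  (forall x : R,
     Derive (fun y => (u y) ^ 2 / 2) x
     = eps * Derive_n u 2 x - delta * Derive_n u 3 x) ->
  is_lim u m_infty s -> is_lim u p_infty (- s) ->
  is_lim (Derive u) m_infty 0 -> is_lim (Derive u) p_infty 0 ->
  forall x : R,
    (sqrt 2 - 1) * ((s - u x) * (u x + s)) <= - eps * Derive u x /\
    - eps * Derive u x <= 1 * ((s - u x) * (u x + s)).
Proof.
  intros Heps Hdelta Hs Hsmall Hsmooth Hmono Heq Hum Hup Hdum Hdup x.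
  assert (Hsqrt2 : sqrt 2 * sqrt 2 = 2) by (apply sqrt_sqrt; lra).
  assert (Hlam : 0 <= sqrt 2 - 1) by (pose proof (sqrt_pos 2); nra).
  assert (Hlam1 : (sqrt 2 - 1) ^ 2 + 2 * (sqrt 2 - 1) <= 1) by nra.
  pose proof (barrier_nonpos eps delta s u Heps Hdelta Hs Hsmall Hsmooth Hmono Heq
                Hum Hup Hdum Hdup (sqrt 2 - 1) x Hlam Hlam1) as Hlower.
  pose proof (barrier1_nonneg eps delta s u Heps Hdelta Hs Hsmall Hsmooth Hmono Heq
                Hum Hup Hdum Hdup x) as Hupper.
  unfold barrier in Hlower, Hupper. split; lra.
Qed.
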